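(* In the setting below, an element $x\in V$ is invertible in the Jordan algebra $V$ if and only if $h\in[x,\mathfrak g_{-1}(h)]$.
   Context: $\mathfrak g$ is a hermitian simple real Lie algebra, $\theta$ a Cartan involution, $\mathfrak g=\mathfrak k\oplus\mathfrak p$, $h\in\mathfrak p$ an Euler element (non-zero, $\operatorname{ad}h$ diagonalizable with eigenvalues in $\{-1,0,1\}$), $\mathfrak g_\lambda(h)=\ker(\operatorname{ad}h-\lambda)$. Choose $e\in V:=\mathfrak g_1(h)$ with $[e,\theta(e)]=-2h$; then $x*y:=-\tfrac12[[x,\theta(e)],y]$ makes $V$ a euclidean Jordan algebra with unit $e$; invertibility refers to this Jordan algebra. *)

(* A finite-dimensional real Lie algebra is modelled on the
   carrier 'rV[R]_n (R : realType, n = dim g) with a bracket [br]. *)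
From HB Require Import structures.
From mathcomp Require Import all_boot all_order all_algebra.
From mathcomp Require Import reals.
Set Implicit Arguments. Unset Strict Implicit. Unset Printing Implicit Defensive.
Import Order.TTheory GRing.Theory Num.Theory.
Local Open Scope ring_scope.

Section LieDefs.
Variables (R : realType) (n : nat).
Notation g := 'rV[R]_n.
Variable br : g -> g -> g.

Definition is_lie_bracket : Prop :=
  [/\ (forall (a : R) (x y z : g), br (a *: x + y) z = a *: br x z + br y z),
      (forall (a : R) (x y z : g), br z (a *: x + y) = a *: br z x + br z y),
      (forall x : g, br x x = 0) &
      (forall x y z : g, br x (br y z) + br y (br z x) + br z (br x y) = 0)].

(* ideals, given as row spaces of n x n matrices *)
Definition is_ideal (I : 'M[R]_n) : Prop :=
  forall x y : g, (y <= I)%MS -> (br x y <= I)%MS.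

Definition is_simple : Prop :=
  (exists x y : g, br x y != 0) /\
  (forall I : 'M[R]_n, is_ideal I -> \rank I = 0%N \/ \rank I = n).

Definition killing (x y : g) : R :=
  \tr (lin1_mx (fun z : g => br x (br y z))).

Definition is_cartan_involution (theta : g -> g) : Prop :=
  [/\ (forall (a : R) (x y : g), theta (a *: x + y) = a *: theta x + theta y),
      (forall x y : g, theta (br x y) = br (theta x) (theta y)),
      (forall x : g, theta (theta x) = x) &
      (forall x : g, x != 0 -> 0 < - killing x (theta x))].

(* hermitian simple: simple, and the centre of k = Fix(theta) is nonzero *)
Definition is_hermitian (theta : g -> g) : Prop :=
  is_simple /\
  exists z : g, [/\ z != 0, theta z = z &
                    forall x : g, theta x = x -> br z x = 0].

Definition eigsp (h : g) (lambda : R) (x : g) : Prop := br h x = lambda *: x.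

Definition is_euler (h : g) : Prop :=
  h != 0 /\
  forall x : g, exists xm x0 xp : g,
    [/\ eigsp h (-1) xm, eigsp h 0 x0, eigsp h 1 xp & x = xm + x0 + xp].

Definition jprod (theta : g -> g) (e x y : g) : g :=
  - (2%:R^-1) *: br (br x (theta e)) y.

Definition jinvertible (theta : g -> g) (h e x : g) : Prop :=
  exists y : g, [/\ eigsp h 1 y,
                    jprod theta e x y = e &
                    jprod theta e (jprod theta e x x) y = x].
End LieDefs.

From HB Require Import structures.
From mathcomp Require Import all_boot all_order all_algebra.
From mathcomp Require Import reals.
From mathcomp Require Import lra.
Import Order.TTheory GRing.Theory Num.Theory.
Local Open Scope ring_scope.
Set Implicit Arguments. Unset Strict Implicit. Unset Printing Implicit Defensive.

(* Write [quad a u = [a, [a, u]]] for [a] in [g_1], [u] in [g_-1], and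
   [f = - theta e], so that [(e, 2h, f)] is an sl2-triple and the Jordan product
   is [x * y = [[x, f], y] / 2].  If [[x, y] = h] with [y] in [g_-1], then
   [- quad e y] is the Jordan inverse of [x], by direct Jacobi computations.
   Conversely, if [x] is invertible, an explicit [v] built from its inverse has
   [quad x v = e]; the fundamental formula of the Jordan pair [(g_1, g_-1)]
   gives [range (quad (quad x v)) <= range (quad x)], and [quad e] is bijective,
   so [quad x] maps [g_-1] onto [g_1].  Pick [y] with [quad x y = - x]: then
   [c = [x, y] - h] lies in [g_0] and kills [g_1], hence (through the
   sl2-triple) [g_-1], and invariance of the Killing form gives
   [B(c, theta c) = 0], so [c = 0]. *)

Lemma row_entry (R : Type) (n : nat) (u v : 'rV[R]_n) : u = v -> forall j, u 0 j = v 0 j.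
Proof. by move=> ->. Qed.

(* Closes a goal that is a linear combination of the vector equations in the
   context, by [lra] on each coordinate. *)
Ltac row_lra :=
  repeat match goal with x := _ |- _ => subst x end;
  let j := fresh "j" in apply/rowP => j;
  repeat match goal with H : _ = _ |- _ =>
    move: (row_entry H j); clear H end;
  rewrite ?mxE; lra.

Section LieAlgebra.
Variables (R : realType) (n : nat) (br : 'rV[R]_n -> 'rV[R]_n -> 'rV[R]_n).
Hypothesis br_lie : is_lie_bracket br.

Lemma br_linearl a x y z : br (a *: x + y) z = a *: br x z + br y z.
Proof. by case: br_lie. Qed.

Lemma br_linearr z a x y : br z (a *: x + y) = a *: br z x + br z y.
Proof. by case: br_lie. Qed.

Lemma br0l z : br 0 z = 0.
Proof. by have := br_linearl (-1) 0 0 z; rewrite scaler0 addr0 scaleN1r addNr. Qed.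

Lemma br0r z : br z 0 = 0.
Proof. by have := br_linearr z (-1) 0 0; rewrite scaler0 addr0 scaleN1r addNr. Qed.

Lemma brDl x y z : br (x + y) z = br x z + br y z.
Proof. by rewrite -{1}[x]scale1r br_linearl scale1r. Qed.

Lemma brDr z x y : br z (x + y) = br z x + br z y.
Proof. by rewrite -{1}[x]scale1r br_linearr scale1r. Qed.

Lemma brZl a x z : br (a *: x) z = a *: br x z.
Proof. by rewrite -[a *: x]addr0 br_linearl br0l addr0. Qed.

Lemma brZr z a x : br z (a *: x) = a *: br z x.
Proof. by rewrite -[a *: x]addr0 br_linearr br0r addr0. Qed.

Lemma brNl x z : br (- x) z = - br x z.
Proof. by rewrite -scaleN1r brZl scaleN1r. Qed.

Lemma brNr z x : br z (- x) = - br z x.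
Proof. by rewrite -scaleN1r brZr scaleN1r. Qed.

Lemma brBl x y z : br (x - y) z = br x z - br y z.
Proof. by rewrite brDl brNl. Qed.

Lemma brBr z x y : br z (x - y) = br z x - br z y.
Proof. by rewrite brDr brNr. Qed.

Lemma brxx x : br x x = 0.
Proof. by case: br_lie. Qed.

Lemma brC x y : br x y = - br y x.
Proof.
have := brxx (x + y).
by rewrite brDl !brDr !brxx add0r addr0 => /eqP; rewrite addr_eq0 => /eqP.
Qed.

Lemma jacobiD a b c : br a (br b c) = br (br a b) c + br b (br a c).
Proof.
have [_ _ _ jacobi] := br_lie.
have := jacobi a b c; rewrite (brC c a) (brC c (br a b)) brNr => J; row_lra.
Qed.

Lemma lin1_mx_ext (F G : 'rV[R]_n -> 'rV[R]_n) : F =1 G -> lin1_mx F = lin1_mx G.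
Proof. by move=> FG; apply/matrixP => i j; rewrite !mxE FG. Qed.

Lemma lin1_mxB (F G : 'rV[R]_n -> 'rV[R]_n) :
  lin1_mx (fun z => F z - G z) = lin1_mx F - lin1_mx G.
Proof. by apply/matrixP => i j; rewrite !mxE. Qed.

Lemma lin1_mxD (F G : 'rV[R]_n -> 'rV[R]_n) :
  lin1_mx (fun z => F z + G z) = lin1_mx F + lin1_mx G.
Proof. by apply/matrixP => i j; rewrite !mxE. Qed.

Lemma lin1_mxZ c (F : 'rV[R]_n -> 'rV[R]_n) :
  lin1_mx (fun z => c *: F z) = c *: lin1_mx F.
Proof. by apply/matrixP => i j; rewrite !mxE. Qed.

Lemma lin1_mx_comp_br a (G : 'rV[R]_n -> 'rV[R]_n) :
  lin1_mx (fun z => br a (G z)) = lin1_mx G *m lin1_mx (br a).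
Proof.
apply/matrixP => i j; rewrite !mxE.
rewrite {1}(row_sum_delta (G (delta_mx 0 i))) (big_morph (br a) (brDr a) (br0r a)).
by rewrite summxE; apply: eq_bigr => k _; rewrite brZr !mxE.
Qed.

Lemma killingD c u v : killing br c (u + v) = killing br c u + killing br c v.
Proof.
rewrite /killing -mxtraceD -lin1_mxD; congr (\tr _); apply: lin1_mx_ext => z.
by rewrite brDl brDr.
Qed.

Lemma killingZ c a u : killing br c (a *: u) = a * killing br c u.
Proof.
rewrite /killing -mxtraceZ -lin1_mxZ; congr (\tr _); apply: lin1_mx_ext => z.
by rewrite brZl brZr.
Qed.

Lemma killing0l u : killing br 0 u = 0.
Proof.
rewrite /killing (_ : lin1_mx _ = 0) ?mxtrace0 //.
by apply/matrixP => i j; rewrite !mxE br0l mxE.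
Qed.

(* After expanding both sides by Jacobi, the leftover terms agree by cyclicity
   of the trace. *)
Lemma killing_invariant c a b : killing br c (br a b) = killing br (br c a) b.
Proof.
rewrite /killing.
have -> : lin1_mx (fun z => br c (br (br a b) z)) =
    lin1_mx (fun z => br c (br a (br b z))) - lin1_mx (fun z => br c (br b (br a z))).
  by rewrite -lin1_mxB; apply: lin1_mx_ext => z; rewrite -brBr (jacobiD a b z) addrK.
have -> : lin1_mx (fun z => br (br c a) (br b z)) =
    lin1_mx (fun z => br c (br a (br b z))) - lin1_mx (fun z => br a (br c (br b z))).
  by rewrite -lin1_mxB; apply: lin1_mx_ext => z; rewrite (jacobiD c a (br b z)) addrK.
rewrite !raddfB /=; congr (_ - _).
rewrite (lin1_mx_comp_br c (fun z => br b (br a z))) (lin1_mx_comp_br b (br a)).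
rewrite (lin1_mx_comp_br a (fun z => br c (br b z))) (lin1_mx_comp_br c (br b)).
by rewrite -!mulmxA mxtrace_mulC mulmxA.
Qed.

Section Grading.
Variable h : 'rV[R]_n.
Hypothesis h_grading : forall x : 'rV[R]_n, exists xm x0 xp : 'rV[R]_n,
  [/\ eigsp br h (-1) xm, eigsp br h 0 x0, eigsp br h 1 xp & x = xm + x0 + xp].

Local Notation g_ := (eigsp br h).
Local Notation quad a u := (br a (br a u)).

Lemma eigsp_br l m a b : g_ l a -> g_ m b -> g_ (l + m) (br a b).
Proof. by rewrite /eigsp => Ha Hb; rewrite jacobiD Ha Hb brZl brZr scalerDl. Qed.

Lemma eigsp_eq0 l w : g_ l w -> l * (1 - l * l) != 0 -> w = 0.
Proof.
move=> Hw Hl; have [xm [x0 [xp [Hm H0 Hp Hx]]]] := h_grading w.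
rewrite /eigsp in Hw Hm H0 Hp.
have E1 : l *: w = - xm + xp.
  by rewrite -Hw Hx !brDr Hm H0 Hp scaleN1r scale0r scale1r addr0.
have E2 : (l * l) *: w = xm + xp.
  have := congr1 (br h) E1; rewrite brZr Hw scalerA brDr brNr Hm Hp.
  by rewrite scaleN1r scale1r opprK.
have E3 : x0 = (1 - l * l) *: w by rewrite scalerBl scale1r E2; row_lra.
have /eqP : ((1 - l * l) * l) *: w = 0 by move: H0; rewrite scale0r E3 brZr Hw scalerA.
by rewrite scaler_eq0 mulrC (negbTE Hl) => /eqP.
Qed.

Lemma br11_eq0 a b : g_ 1 a -> g_ 1 b -> br a b = 0.
Proof. by move=> Ha Hb; apply: (eigsp_eq0 (eigsp_br Ha Hb)); apply/eqP; lra. Qed.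

Lemma brNN_eq0 a b : g_ (-1) a -> g_ (-1) b -> br a b = 0.
Proof. by move=> Ha Hb; apply: (eigsp_eq0 (eigsp_br Ha Hb)); apply/eqP; lra. Qed.

Lemma eigsp_br1N a b : g_ 1 a -> g_ (-1) b -> g_ 0 (br a b).
Proof. by move=> Ha Hb; have := eigsp_br Ha Hb; rewrite addrN. Qed.

Lemma eigsp_brN1 a b : g_ (-1) a -> g_ 1 b -> g_ 0 (br a b).
Proof. by move=> Ha Hb; have := eigsp_br Ha Hb; rewrite addNr. Qed.

Lemma eigsp_br01 a b : g_ 0 a -> g_ 1 b -> g_ 1 (br a b).
Proof. by move=> Ha Hb; have := eigsp_br Ha Hb; rewrite add0r. Qed.

Lemma eigsp_br10 a b : g_ 1 a -> g_ 0 b -> g_ 1 (br a b).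
Proof. by move=> Ha Hb; have := eigsp_br Ha Hb; rewrite addr0. Qed.

Lemma eigsp_br0N a b : g_ 0 a -> g_ (-1) b -> g_ (-1) (br a b).
Proof. by move=> Ha Hb; have := eigsp_br Ha Hb; rewrite add0r. Qed.

Lemma eigsp_brN0 a b : g_ (-1) a -> g_ 0 b -> g_ (-1) (br a b).
Proof. by move=> Ha Hb; have := eigsp_br Ha Hb; rewrite addr0. Qed.

Lemma eigspD l a b : g_ l a -> g_ l b -> g_ l (a + b).
Proof. by rewrite /eigsp => Ha Hb; rewrite brDr Ha Hb scalerDr. Qed.

Lemma eigspZ l c a : g_ l a -> g_ l (c *: a).
Proof. by rewrite /eigsp => Ha; rewrite brZr Ha !scalerA mulrC. Qed.

Lemma eigspN l a : g_ l a -> g_ l (- a).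
Proof. by rewrite /eigsp => Ha; rewrite brNr Ha scalerN. Qed.

Lemma eigspB l a b : g_ l a -> g_ l b -> g_ l (a - b).
Proof. by move=> Ha Hb; apply: eigspD => //; apply: eigspN. Qed.

Lemma eigsp0_h : g_ 0 h.
Proof. by rewrite /eigsp brxx scale0r. Qed.

Lemma eigsp0E a : g_ 0 a -> br h a = 0.
Proof. by rewrite /eigsp scale0r. Qed.

Lemma eigsp1E a : g_ 1 a -> br h a = a.
Proof. by rewrite /eigsp scale1r. Qed.

Lemma eigspNE a : g_ (-1) a -> br h a = - a.
Proof. by rewrite /eigsp scaleN1r. Qed.

Lemma br_brN_comm a u w : g_ 1 a -> g_ (-1) u -> g_ (-1) w ->
  br (br a u) w = br (br a w) u.
Proof.
move=> Ha Hu Hw; have J := jacobiD a u w.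
rewrite (brNN_eq0 Hu Hw) br0r in J.
have C : br u (br a w) = - br (br a w) u by rewrite brC.
row_lra.
Qed.

Lemma br_br1_comm a b u : g_ 1 a -> g_ 1 b -> g_ (-1) u ->
  br (br a u) b = br (br b u) a.
Proof.
move=> Ha Hb Hu; have J := jacobiD b a u.
rewrite (br11_eq0 Hb Ha) br0l in J.
have C1 : br (br a u) b = - br b (br a u) by rewrite brC.
have C2 : br (br b u) a = - br a (br b u) by rewrite brC.
row_lra.
Qed.

Lemma br_quad_skew a u w : g_ 1 a -> g_ (-1) u -> g_ (-1) w ->
  br (quad a u) (br a w) = - br (br a u) (quad a w).
Proof.
move=> Ha Hu Hw.
have Hp := eigsp_br1N Ha Hu; have Hq := eigsp_br1N Ha Hw.
have Hap := eigsp_br10 Ha Hp; have Hs := eigsp_br10 Ha Hq.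
have K1 : br (br a u) w + br u (br a w) = 0.
  by have J := jacobiD a u w; rewrite (brNN_eq0 Hu Hw) br0r in J; row_lra.
have K1' := congr1 (br a) K1; rewrite brDr br0r in K1'.
have T2 := jacobiD a (br a u) w.
have T3 := jacobiD a u (br a w).
have K2 : br (quad a u) w + 2%:R *: br (br a u) (br a w) + br u (quad a w) = 0.
  by row_lra.
have K2' := congr1 (br a) K2; rewrite !brDr brZr br0r in K2'.
have T4 := jacobiD a (quad a u) w; rewrite (br11_eq0 Ha Hap) br0l in T4.
have T5 := jacobiD a (br a u) (br a w).
have T6 := jacobiD a u (quad a w); rewrite (br11_eq0 Ha Hs) br0r in T6.
row_lra.
Qed.

Lemma br_br_quad a u w : g_ 1 a -> g_ (-1) u -> g_ (-1) w ->
  br (br a u) (quad a w) = br a (br (br (br a u) a) w).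
Proof.
move=> Ha Hu Hw.
have Hs := eigsp_br10 Ha (eigsp_br1N Ha Hw).
have S := br_quad_skew Ha Hu Hw.
have T1 := jacobiD (br a u) a w.
have T1' := congr1 (br a) T1; rewrite brDr in T1'.
have T2 := congr1 (br a) (congr1 (br a) (br_brN_comm Ha Hu Hw)).
have T3 := jacobiD a (br a u) (br a w).
have T4 := congr1 (br a) (jacobiD a (br a w) u); rewrite brDr in T4.
have T6 := jacobiD a (quad a w) u; rewrite (br11_eq0 Ha Hs) br0l in T6.
have T7 := jacobiD a (br a w) (br a u).
have C1 : br (br (br a u) a) w = - br (quad a u) w by rewrite (brC (br a u) a) brNl.
have C1' := congr1 (br a) C1; rewrite brNr in C1'.
have C2 : br (br a w) (quad a u) = - br (quad a u) (br a w) by rewrite brC.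
have C3 : br (quad a w) (br a u) = - br (br a u) (quad a w) by rewrite brC.
have C4 : br (br a w) (br a u) = - br (br a u) (br a w) by rewrite brC.
have C4' := congr1 (br a) C4; rewrite brNr in C4'.
row_lra.
Qed.

Lemma br_quad_br a v w : g_ 1 a -> g_ (-1) v -> g_ (-1) w ->
  br a (br (quad a v) w) = quad a (br (br a w) v).
Proof.
move=> Ha Hv Hw.
have Hb := eigsp_br01 (eigsp_br1N Ha Hv) Ha.
have X := br_br_quad Ha Hv Hw.
have J1 := jacobiD (br a v) a (br a w).
have J2 := congr1 (br a) (jacobiD (br a v) a w); rewrite brDr in J2.
have P := congr1 (br a) (congr1 (br a) (br_brN_comm Ha Hv Hw)).
have J3 := jacobiD a (br (br a v) a) w; rewrite (br11_eq0 Ha Hb) br0l in J3.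
have C : br a (br (br (br a v) a) w) = - br a (br (quad a v) w).
  by rewrite (brC (br a v)) brNl brNr.
row_lra.
Qed.

Lemma br_br_quadN a u w : g_ 1 a -> g_ (-1) u -> g_ (-1) w ->
  br (br a u) (quad a w) = - quad a (br (br a w) u).
Proof.
move=> Ha Hu Hw.
rewrite (br_br_quad Ha Hu Hw) (brC (br a u)) brNl brNr.
by rewrite (br_quad_br Ha Hu Hw).
Qed.

(* The quadratic maps [quad a] satisfy the fundamental formula of the Jordan
   pair (g_1, g_-1); only the resulting inclusion of ranges is needed. *)
Lemma quad_quad_range a v t : g_ 1 a -> g_ (-1) v -> g_ (-1) t ->
  exists2 w, g_ (-1) w & quad (quad a v) t = quad a w.
Proof.
move=> Ha Hv Ht; set p := br a v; set q := br a t; set b := br a p.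
have Hp : g_ 0 p by apply: eigsp_br1N.
have Hq : g_ 0 q by apply: eigsp_br1N.
have Hb : g_ 1 b by apply: eigsp_br10.
have Hw1 : g_ (-1) (br p t) by apply: eigsp_br0N.
have Hm : g_ (-1) (br q v) by apply: eigsp_br0N.
have Hr : g_ (-1) (br p v) by apply: eigsp_br0N.
exists (br (br a (br p t)) v - br q (br p v) + br (br a (br q v)) v).
  by apply: eigspD; first apply: eigspB; apply: eigsp_br0N => //; apply: eigsp_br1N.
have T1 := congr1 (br b) (jacobiD a p t); rewrite brDr in T1.
have T2 := jacobiD b a (br p t); rewrite (br11_eq0 Hb Ha) br0l in T2.
have T2' := br_quad_br Ha Hv Hw1.
have T3 := jacobiD b p q.
have T4 := jacobiD b a t; rewrite (br11_eq0 Hb Ha) br0l add0r in T4.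
have T4' := br_quad_br Ha Hv Ht.
have T4'' := congr1 (br p) T4.
have T4''' := br_br_quadN Ha Hv Hm.
have T4c := congr1 (br p) T4'.
have Hd : br b p = quad a (br p v) by rewrite brC (br_br_quadN Ha Hv Hv) opprK.
have Hd1 : g_ 1 (quad a (br p v)) by apply: eigsp_br10 => //; apply: eigsp_br1N.
have T6 := jacobiD (quad a (br p v)) a t; rewrite (br11_eq0 Hd1 Ha) br0l in T6.
have T6' := br_quad_br Ha Hr Ht.
have Hd' := congr1 (fun s => br s q) Hd.
rewrite !brDr ?brNr.
row_lra.
Qed.

Section Sl2Triple.
Variables e f : 'rV[R]_n.
Hypotheses (He : g_ 1 e) (Hf : g_ (-1) f) (Hef : br e f = 2%:R *: h).

(* [jmul2 a b] is twice the Jordan product [a * b] on g_1 when [f = - theta e]. *)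
Local Notation jmul2 a b := (br (br a f) b).

Lemma jmul2_unit a : g_ 1 a -> jmul2 a e = 2%:R *: a.
Proof. by move=> Ha; rewrite (br_br1_comm Ha He Hf) Hef brZl eigsp1E. Qed.

Lemma br_e_br_f a : g_ 1 a -> br e (br f a) = 2%:R *: a.
Proof. by move=> Ha; rewrite jacobiD Hef brZl (br11_eq0 He Ha) br0r addr0 eigsp1E. Qed.

Lemma br_f_br_e u : g_ (-1) u -> br f (br e u) = 2%:R *: u.
Proof.
move=> Hu; rewrite jacobiD (brNN_eq0 Hf Hu) br0r addr0 (brC f e) Hef brNl brZl.
by rewrite eigspNE // scalerN opprK.
Qed.

Lemma quad_e_quad_f a : g_ 1 a -> quad e (quad f a) = 4%:R *: a.
Proof.
move=> Ha; have Ht : g_ 0 (br f a) by apply: eigsp_brN1.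
rewrite (jacobiD e f (br f a)) Hef brZl (eigsp0E Ht) scaler0 add0r (br_e_br_f Ha).
by rewrite !brZr (br_e_br_f Ha) scalerA -natrM.
Qed.

Lemma quad_f_quad_e u : g_ (-1) u -> quad f (quad e u) = 4%:R *: u.
Proof.
move=> Hu; have Ht : g_ 0 (br e u) by apply: eigsp_br1N.
rewrite (jacobiD f e (br e u)) (brC f e) Hef brNl brZl (eigsp0E Ht) scaler0 oppr0 add0r.
by rewrite (br_f_br_e Hu) !brZr (br_f_br_e Hu) scalerA -natrM.
Qed.

Lemma centralize_gN c : g_ 0 c -> (forall s, g_ 1 s -> br c s = 0) ->
  forall u, g_ (-1) u -> br c u = 0.
Proof.
move=> Hc c_g1 u Hu.
have cf : br c f = 0.
  have E : br e (br f c) = 0.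
    by rewrite jacobiD Hef brZl eigsp0E // scaler0 add0r (brC e c) c_g1 // oppr0 br0r.
  have := br_f_br_e (eigsp_brN0 Hf Hc); rewrite E br0r => /esym/eqP.
  by rewrite scaler_eq0 pnatr_eq0 /= brC oppr_eq0 => /eqP.
have c_quad_f s : g_ 1 s -> br c (quad f s) = 0.
  by move=> Hs; rewrite !(jacobiD c f) cf !br0l !add0r c_g1 ?br0r.
have := c_quad_f _ (eigsp_br10 He (eigsp_br1N He Hu)).
rewrite quad_f_quad_e // brZr => /eqP; rewrite scaler_eq0 pnatr_eq0 /=.
by move/eqP.
Qed.

(* The hypotheses say [x * z = e] and [x^2 * z = x] for the Jordan product. *)
Lemma quad_jordan_inverse x z : g_ 1 x -> g_ 1 z ->
  jmul2 x z = 2%:R *: e -> jmul2 (jmul2 x x) z = 4%:R *: x ->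
  quad x (quad (br z f) f) = - (8%:R *: e).
Proof.
move=> Hx Hz H1 H2.
have HA : g_ 0 (br x f) by apply: eigsp_br1N.
have HB : g_ 0 (br z f) by apply: eigsp_br1N.
have HX2 : g_ 1 (jmul2 x x) by apply: eigsp_br01.
have SB : br (br z f) x = 2%:R *: e by rewrite (br_br1_comm Hz Hx Hf).
have ExB : br x (br z f) = - (2%:R *: e) by rewrite brC SB.
have EBh : br (br z f) h = 0 by rewrite brC eigsp0E // oppr0.
have EeB : br e (br z f) = - (2%:R *: z) by rewrite brC jmul2_unit.
have EeA : br e (br x f) = - (2%:R *: x) by rewrite brC jmul2_unit.
have EeBf : br e (br (br z f) f) = - (2%:R *: br z f).
  by rewrite jacobiD EeB Hef brZr EBh scaler0 addr0 brNl brZl.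
have ExBf : br x (br (br z f) f) = - (4%:R *: h) + br (br z f) (br x f).
  by rewrite jacobiD ExB brNl brZl Hef scalerA -natrM.
have F1 : br x (quad (br z f) f) = 4%:R *: br z f + br (br z f) (br (br z f) (br x f)).
  rewrite jacobiD ExB ExBf brNl brZl EeBf brDr brNr brZr EBh scaler0 oppr0 add0r.
  by rewrite scalerN opprK scalerA -natrM.
have EzA : br z (br x f) = - (2%:R *: e) by rewrite brC H1.
have EeBA : br e (br (br z f) (br x f)) = 0.
  by rewrite jacobiD EeB EeA brNl brZl EzA brNr brZr SB; row_lra.
have EBX2 : br (br z f) (jmul2 x x) = 4%:R *: x by rewrite (br_br1_comm Hz HX2 Hf).
have ExBA : br x (br (br z f) (br x f)) = 0.
  by rewrite jacobiD ExB brNl brZl EeA (brC x (br x f)) brNr EBX2; row_lra.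
have F2 : br x (br (br z f) (br (br z f) (br x f))) = 0.
  by rewrite jacobiD ExB brNl brZl EeBA ExBA br0r scaler0 oppr0 addr0.
by rewrite F1 brDr F2 addr0 brZr ExB scalerN scalerA -natrM.
Qed.

Lemma br_br_f_of_br_eq_h x y : g_ (-1) y -> br x y = h -> br (br x f) y = - f.
Proof.
move=> Hy Hxy; have J := jacobiD x f y; rewrite (brNN_eq0 Hf Hy) br0r Hxy in J.
have C : br f h = f by rewrite brC (eigspNE Hf) opprK.
row_lra.
Qed.

Lemma jmul2_quad_e x y : g_ 1 x -> g_ (-1) y -> br x y = h ->
  jmul2 x (quad e y) = - (2%:R *: e).
Proof.
move=> Hx Hy Hxy.
have EAy := br_br_f_of_br_eq_h Hy Hxy.
have J1 : br (br x f) (br e y) = 0.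
  by rewrite jacobiD jmul2_unit // brZl Hxy EAy brNr Hef subrr.
have J2 : br x (br e y) = - e.
  by rewrite jacobiD (br11_eq0 Hx He) br0l add0r Hxy brC eigsp1E.
by rewrite jacobiD J1 br0r addr0 jmul2_unit // brZl J2 scalerN.
Qed.

Lemma jmul2_sqr_quad_e x y : g_ 1 x -> g_ (-1) y -> br x y = h ->
  jmul2 (jmul2 x x) (quad e y) = - (4%:R *: x).
Proof.
move=> Hx Hy Hxy.
have HA : g_ 0 (br x f) by apply: eigsp_br1N.
have HX2 : g_ 1 (jmul2 x x) by apply: eigsp_br01.
have EAy := br_br_f_of_br_eq_h Hy Hxy.
have EAh : br (br x f) h = 0 by rewrite brC eigsp0E // oppr0.
have EX2y : br (jmul2 x x) y = br x f.
  have J := jacobiD (br x f) x y; rewrite Hxy EAh EAy brNr in J.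
  row_lra.
have EA2y : br (br (jmul2 x x) f) y = br (br x f) f.
  have J := jacobiD (jmul2 x x) f y; rewrite (brNN_eq0 Hf Hy) br0r EX2y in J.
  have C : br f (br x f) = - br (br x f) f by rewrite brC.
  row_lra.
have EeA : br e (br x f) = - (2%:R *: x) by rewrite brC jmul2_unit.
have EeAf : br e (br (br x f) f) = - (2%:R *: br x f).
  by rewrite jacobiD EeA Hef brZr EAh scaler0 addr0 brNl brZl.
have J1 : br (br (jmul2 x x) f) (br e y) = 0.
  by rewrite jacobiD (jmul2_unit HX2) brZl EX2y EA2y EeAf; row_lra.
have J2 : br (jmul2 x x) (br e y) = - (2%:R *: x).
  by rewrite jacobiD (br11_eq0 HX2 He) br0l add0r EX2y EeA.
by rewrite jacobiD J1 br0r addr0 (jmul2_unit HX2) brZl J2 scalerN scalerA -natrM.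
Qed.

(* [s = quad e (quad f s) / 4 = quad (quad x v1) (quad f s) / 4]. *)
Lemma quad_surjective x v1 : g_ 1 x -> g_ (-1) v1 -> quad x v1 = e ->
  forall s, g_ 1 s -> exists2 v, g_ (-1) v & quad x v = s.
Proof.
move=> Hx Hv1 Hxv s Hs.
have Ht : g_ (-1) (quad f s) by apply: eigsp_brN0 => //; apply: eigsp_brN1.
have [w Hw] := quad_quad_range Hx Hv1 Ht; rewrite Hxv quad_e_quad_f // => Ew.
exists (4%:R^-1 *: w); first exact: eigspZ.
by rewrite !brZr -Ew scalerA mulVf ?scale1r ?pnatr_eq0.
Qed.

End Sl2Triple.

Lemma br_br_g1_id x y : g_ 1 x -> g_ (-1) y -> quad x y = - x ->
  (forall s, g_ 1 s -> exists2 w, g_ (-1) w & quad x w = s) ->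
  forall s, g_ 1 s -> br (br x y) s = s.
Proof.
move=> Hx Hy Hxy quad_onto s Hs; have [w Hw <-] := quad_onto s Hs.
by rewrite br_br_quad // (brC (br x y) x) Hxy opprK.
Qed.

Section CartanInvolution.
Variables (theta : 'rV[R]_n -> 'rV[R]_n) (e : 'rV[R]_n).
Hypotheses (theta_cartan : is_cartan_involution br theta) (theta_h : theta h = - h).
Hypotheses (He : g_ 1 e) (Hee : br e (theta e) = - (2%:R *: h)).

Lemma theta_linear a u v : theta (a *: u + v) = a *: theta u + theta v.
Proof. by case: theta_cartan. Qed.

Lemma theta_br u v : theta (br u v) = br (theta u) (theta v).
Proof. by case: theta_cartan. Qed.

Lemma theta0 : theta 0 = 0.
Proof. by have := theta_linear (-1) 0 0; rewrite scaler0 addr0 scaleN1r addNr. Qed.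

Lemma thetaZ a u : theta (a *: u) = a *: theta u.
Proof. by rewrite -[a *: u]addr0 theta_linear theta0 addr0. Qed.

Lemma thetaD u v : theta (u + v) = theta u + theta v.
Proof. by rewrite -{1}[u]scale1r theta_linear scale1r. Qed.

Lemma thetaN u : theta (- u) = - theta u.
Proof. by rewrite -scaleN1r thetaZ scaleN1r. Qed.

Lemma theta_eigsp l a : g_ l a -> g_ (- l) (theta a).
Proof.
by rewrite /eigsp => Ha; rewrite scaleNr -thetaZ -Ha theta_br theta_h brNl opprK.
Qed.

Let f := - theta e.

Let Hf : g_ (-1) f.
Proof. exact/eigspN/theta_eigsp. Qed.

Let Hef : br e f = 2%:R *: h.
Proof. by rewrite brNr Hee opprK. Qed.

Lemma jprodE a b : jprod br theta e a b = 2%:R^-1 *: br (br a f) b.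
Proof. by rewrite /jprod /f brNr brNl scalerN scaleNr. Qed.

Lemma jinvertible_of_br_eq_h x : g_ 1 x ->
  (exists y, g_ (-1) y /\ br x y = h) -> jinvertible br theta h e x.
Proof.
move=> Hx [y [Hy Hxy]]; exists (- quad e y); split.
- exact/eigspN/(eigsp_br10 He)/eigsp_br1N.
- by rewrite jprodE brNr (jmul2_quad_e He Hf Hef Hx Hy Hxy); row_lra.
- by rewrite !jprodE brNr !brZl (jmul2_sqr_quad_e He Hf Hef Hx Hy Hxy); row_lra.
Qed.

Lemma quad_surjective_of_jinvertible x : g_ 1 x -> jinvertible br theta h e x ->
  forall s, g_ 1 s -> exists2 v, g_ (-1) v & quad x v = s.
Proof.
move=> Hx [z [Hz xz_e xxz_x]]; rewrite !jprodE !brZl in xz_e xxz_x.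
have H1 : br (br x f) z = 2%:R *: e by row_lra.
have H2 : br (br (br (br x f) x) f) z = 4%:R *: x by row_lra.
have Hzf : g_ 0 (br z f) by apply: eigsp_br1N.
apply: (quad_surjective He Hf Hef Hx (v1 := - 8%:R^-1 *: quad (br z f) f)).
  exact/eigspZ/(eigsp_br0N Hzf)/(eigsp_br0N Hzf).
by rewrite !brZr (quad_jordan_inverse He Hf Hef Hx Hz H1 H2); row_lra.
Qed.

(* For [c = [x, y] - h]: [B(c, theta c) = B([c, theta x], theta y) + B(c, h)]
   with [theta x] in [g_-1] and [B(c, h) = - B([c, e], theta e) / 2], so it
   vanishes, and [B_theta] is definite. *)
Lemma br_eq_h_of_centralizes_g1 x y : g_ 1 x -> g_ (-1) y ->
  (forall s, g_ 1 s -> br (br x y - h) s = 0) -> br x y = h.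
Proof.
move=> Hx Hy c_g1; set c := br x y - h.
have Hc : g_ 0 c by apply: eigspB; [apply: eigsp_br1N | apply: eigsp0_h].
have c_gN := centralize_gN He Hf Hef Hc c_g1.
have Bc : killing br c (theta c) = 0.
  have -> : theta c = br (theta x) (theta y) + h.
    by rewrite thetaD thetaN theta_br theta_h opprK.
  have -> : h = - 2%:R^-1 *: br e (theta e) by rewrite Hee; row_lra.
  rewrite killingD !killing_invariant c_gN; last exact: theta_eigsp.
  by rewrite killingZ killing_invariant c_g1 // !killing0l mulr0 addr0.
have [_ _ _ B_theta_pos] := theta_cartan.
apply/eqP; rewrite -subr_eq0 -/c; apply/negPn/negP => /B_theta_pos.
by rewrite Bc oppr0 ltxx.
Qed.

Lemma br_eq_h_of_jinvertible x : g_ 1 x -> jinvertible br theta h e x ->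
  exists y, g_ (-1) y /\ br x y = h.
Proof.
move=> Hx /(quad_surjective_of_jinvertible Hx) quad_onto.
have [y Hy Hxy] := quad_onto (- x) (eigspN Hx).
exists y; split => //; apply: br_eq_h_of_centralizes_g1 => // s Hs.
by rewrite brBl (br_br_g1_id Hx Hy Hxy quad_onto Hs) eigsp1E // subrr.
Qed.

Lemma jinvertible_iff x : g_ 1 x ->
  jinvertible br theta h e x <-> exists y, g_ (-1) y /\ br x y = h.
Proof.
by move=> Hx; split; [apply: br_eq_h_of_jinvertible | apply: jinvertible_of_br_eq_h].
Qed.

End CartanInvolution.
End Grading.
End LieAlgebra.

Theorem lemma5p5 (R : realType) (n : nat) (br : 'rV[R]_n -> 'rV[R]_n -> 'rV[R]_n)
  (theta : 'rV[R]_n -> 'rV[R]_n) (h e : 'rV[R]_n) :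
  is_lie_bracket br ->
  is_cartan_involution br theta ->
  is_hermitian br theta ->
  is_euler br h ->
  theta h = - h ->
  eigsp br h 1 e ->
  br e (theta e) = - (2%:R *: h) ->
  forall x : 'rV[R]_n, eigsp br h 1 x ->
    (jinvertible br theta h e x <->
     exists y : 'rV[R]_n, eigsp br h (-1) y /\ br x y = h).
Proof.
move=> lie cartan _ [_ grading] theta_h He Hee x Hx.
exact: (jinvertible_iff lie grading cartan theta_h He Hee Hx).
Qed.
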